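(* Let $\mathsf{CG}$ be the connector gadget. Suppose that $H$ is a subgraph of $\mathsf{CG}$ such that in $H$ each of the four terminals $t^{\mathsf{N}},t^{\mathsf{E}},t^{\mathsf{S}},t^{\mathsf{W}}$ is connected to some interface vertex. Then $H$ has at least $6$ edges. Moreover, if $H$ has exactly $6$ edges, then $H$ either consists of all edges incident to $u^{\mathsf{NW}}$ and to $u^{\mathsf{SE}}$, or of all edges incident to $u^{\mathsf{NE}}$ and to $u^{\mathsf{SW}}$.
   Context: The connector gadget $\mathsf{CG}$ is the undirected graph on $12$ vertices: interface vertices $x^{\mathsf{NW}},x^{\mathsf{NE}},x^{\mathsf{SE}},x^{\mathsf{SW}}$, terminals $t^{\mathsf{N}},t^{\mathsf{E}},t^{\mathsf{S}},t^{\mathsf{W}}$, and vertices $u^{\mathsf{NW}},u^{\mathsf{NE}},u^{\mathsf{SE}},u^{\mathsf{SW}}$, with exactly the following $12$ edges: $u^{\mathsf{NW}}$ is adjacent to $x^{\mathsf{NW}},t^{\mathsf{N}},t^{\mathsf{W}}$; $u^{\mathsf{NE}}$ is adjacent to $x^{\mathsf{NE}},t^{\mathsf{N}},t^{\mathsf{E}}$; $u^{\mathsf{SE}}$ is adjacent to $x^{\mathsf{SE}},t^{\mathsf{S}},t^{\mathsf{E}}$; $u^{\mathsf{SW}}$ is adjacent to $x^{\mathsf{SW}},t^{\mathsf{S}},t^{\mathsf{W}}$. *)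

From HB Require Import structures.
From mathcomp Require Import all_boot.
Set Implicit Arguments. Unset Strict Implicit. Unset Printing Implicit Defensive.

Inductive cg_vertex :=
  | xNW | xNE | xSE | xSW
  | tN | tE | tS | tW
  | uNW | uNE | uSE | uSW.

Definition cgv_to_ord (v : cg_vertex) : 'I_12 :=
  inord (match v with
         | xNW => 0 | xNE => 1 | xSE => 2 | xSW => 3
         | tN => 4 | tE => 5 | tS => 6 | tW => 7
         | uNW => 8 | uNE => 9 | uSE => 10 | uSW => 11 end).
Definition ord_to_cgv (i : 'I_12) : cg_vertex :=
  match val i with
  | 0 => xNW | 1 => xNE | 2 => xSE | 3 => xSW
  | 4 => tN | 5 => tE | 6 => tS | 7 => tW
  | 8 => uNW | 9 => uNE | 10 => uSE | _ => uSW end.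
Lemma cgvK : cancel cgv_to_ord ord_to_cgv.
Proof. by case; rewrite /ord_to_cgv /cgv_to_ord /= ?inordK. Qed.
HB.instance Definition _ := Equality.copy cg_vertex (can_type cgvK).
HB.instance Definition _ := Finite.copy cg_vertex (can_type cgvK).

Inductive cg_edge :=
  | e_uNW_xNW | e_uNW_tN | e_uNW_tW
  | e_uNE_xNE | e_uNE_tN | e_uNE_tE
  | e_uSE_xSE | e_uSE_tS | e_uSE_tE
  | e_uSW_xSW | e_uSW_tS | e_uSW_tW.

Definition cge_to_ord (e : cg_edge) : 'I_12 :=
  inord (match e with
         | e_uNW_xNW => 0 | e_uNW_tN => 1 | e_uNW_tW => 2
         | e_uNE_xNE => 3 | e_uNE_tN => 4 | e_uNE_tE => 5
         | e_uSE_xSE => 6 | e_uSE_tS => 7 | e_uSE_tE => 8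
         | e_uSW_xSW => 9 | e_uSW_tS => 10 | e_uSW_tW => 11 end).
Definition ord_to_cge (i : 'I_12) : cg_edge :=
  match val i with
  | 0 => e_uNW_xNW | 1 => e_uNW_tN | 2 => e_uNW_tW
  | 3 => e_uNE_xNE | 4 => e_uNE_tN | 5 => e_uNE_tE
  | 6 => e_uSE_xSE | 7 => e_uSE_tS | 8 => e_uSE_tE
  | 9 => e_uSW_xSW | 10 => e_uSW_tS | _ => e_uSW_tW end.
Lemma cgeK : cancel cge_to_ord ord_to_cge.
Proof. by case; rewrite /ord_to_cge /cge_to_ord /= ?inordK. Qed.
HB.instance Definition _ := Equality.copy cg_edge (can_type cgeK).
HB.instance Definition _ := Finite.copy cg_edge (can_type cgeK).

Definition cg_ends (e : cg_edge) : cg_vertex * cg_vertex :=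
  match e with
  | e_uNW_xNW => (uNW, xNW) | e_uNW_tN => (uNW, tN) | e_uNW_tW => (uNW, tW)
  | e_uNE_xNE => (uNE, xNE) | e_uNE_tN => (uNE, tN) | e_uNE_tE => (uNE, tE)
  | e_uSE_xSE => (uSE, xSE) | e_uSE_tS => (uSE, tS) | e_uSE_tE => (uSE, tE)
  | e_uSW_xSW => (uSW, xSW) | e_uSW_tS => (uSW, tS) | e_uSW_tW => (uSW, tW)
  end.

Definition interface : pred cg_vertex := [pred v | v \in [:: xNW; xNE; xSE; xSW]].
Definition terminals : seq cg_vertex := [:: tN; tE; tS; tW].

(* A subgraph H of CG is given by its edge set H \subseteq E(CG); adjacency in H. *)
Definition adjH (H : {set cg_edge}) : rel cg_vertex :=
  fun v w => [exists e in H, (cg_ends e == (v, w)) || (cg_ends e == (w, v))].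

Definition connH (H : {set cg_edge}) (v w : cg_vertex) : bool := connect (adjH H) v w.

Definition incident (v : cg_vertex) : {set cg_edge} :=
  [set e | (v == (cg_ends e).1) || (v == (cg_ends e).2)].

From HB Require Import structures.
From mathcomp Require Import all_boot.
Set Implicit Arguments. Unset Strict Implicit. Unset Printing Implicit Defensive.

(* CG has only 2^12 subgraphs, so the theorem is decided by running through all
   of them. For each subgraph and terminal t, a candidate component of t is
   grown by edge relaxation and then checked to be closed under the edges of
   the subgraph; a closed vertex set containing t contains everything connected
   to t, so an interface vertex reachable from t must lie in it. Only this
   closedness check, not the growing procedure, has to be proved correct. *)

Fixpoint subseqs (T : Type) (s : seq T) : seq (seq T) :=
  if s is x :: s' then [seq x :: r | r <- subseqs s'] ++ subseqs s' else [:: [::]].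

Lemma all_subseqs_filter (T : Type) (p : pred T) (s : seq T) (P : pred (seq T)) :
  all P (subseqs s) -> P (filter p s).
Proof.
elim: s P => [|x s IHs] P /=; first by rewrite andbT.
rewrite all_cat all_map => /andP[allx alls].
by case: (p x); [apply: (IHs (fun r => P (x :: r))) | apply: IHs].
Qed.

(* The equality of cg_vertex and cg_edge does not reduce under vm_compute, so
   the decision procedure compares codes instead. *)
Definition vcode (v : cg_vertex) : nat :=
  match v with
  | xNW => 0 | xNE => 1 | xSE => 2 | xSW => 3
  | tN => 4 | tE => 5 | tS => 6 | tW => 7
  | uNW => 8 | uNE => 9 | uSE => 10 | uSW => 11 end.

Lemma vcode_inj : injective vcode. Proof. by case; case. Qed.

Definition vmem (S : seq cg_vertex) (v : cg_vertex) : bool :=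
  has (fun w => vcode w == vcode v) S.

Lemma vmemE S v : vmem S v = (v \in S).
Proof. by apply/hasP/idP => [[w Sw /eqP/vcode_inj <-] // | Sv]; exists v. Qed.

Definition ecode (e : cg_edge) : nat :=
  match e with
  | e_uNW_xNW => 0 | e_uNW_tN => 1 | e_uNW_tW => 2
  | e_uNE_xNE => 3 | e_uNE_tN => 4 | e_uNE_tE => 5
  | e_uSE_xSE => 6 | e_uSE_tS => 7 | e_uSE_tE => 8
  | e_uSW_xSW => 9 | e_uSW_tS => 10 | e_uSW_tW => 11 end.

Lemma ecode_inj : injective ecode. Proof. by case; case. Qed.

Definition cg_edges : seq cg_edge :=
  [:: e_uNW_xNW; e_uNW_tN; e_uNW_tW; e_uNE_xNE; e_uNE_tN; e_uNE_tE;
      e_uSE_xSE; e_uSE_tS; e_uSE_tE; e_uSW_xSW; e_uSW_tS; e_uSW_tW].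

Lemma mem_cg_edges e : e \in cg_edges.
Proof. by rewrite -(mem_map ecode_inj); case: e. Qed.

Lemma cg_edges_uniq : uniq cg_edges.
Proof. by rewrite -(map_inj_uniq ecode_inj). Qed.

Definition edges_of (H : {set cg_edge}) : seq cg_edge := [seq e <- cg_edges | e \in H].

Lemma mem_edges_of (H : {set cg_edge}) e : (e \in edges_of H) = (e \in H).
Proof. by rewrite mem_filter mem_cg_edges andbT. Qed.

Lemma card_edges_of (H : {set cg_edge}) : #|H| = size (edges_of H).
Proof.
have memH : H =i edges_of H by move=> e; rewrite mem_edges_of.
by rewrite (eq_card memH); apply/card_uniqP; rewrite filter_uniq ?cg_edges_uniq.
Qed.

Definition link (S : seq cg_vertex) (e : cg_edge) : seq cg_vertex :=
  let: (u, w) := cg_ends e in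
  if vmem S u == vmem S w then S else if vmem S u then w :: S else u :: S.

Definition component (s : seq cg_edge) (t : cg_vertex) : seq cg_vertex :=
  iter (size s) (fun S => foldl link S s) [:: t].

Definition closed_under (s : seq cg_edge) (S : seq cg_vertex) : bool :=
  all (fun e => vmem S (cg_ends e).1 == vmem S (cg_ends e).2) s.

Definition meets_interface (S : seq cg_vertex) : bool :=
  has (vmem [:: xNW; xNE; xSE; xSW]) S.

Lemma closed_under_connH (H : {set cg_edge}) (S : seq cg_vertex) v w :
  closed_under (edges_of H) S -> connH H v w -> (v \in S) = (w \in S).
Proof.
move=> /allP closedS; apply: closed_connect => x y /existsP[e /andP[eH ends]].
have := closedS e; rewrite mem_edges_of !vmemE => /(_ eH)/eqP.
by case/orP: ends => /eqP-> /= => [|/esym] ->.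
Qed.

Lemma closed_under_meets_interface (H : {set cg_edge}) (S : seq cg_vertex)
    t x :
  closed_under (edges_of H) S -> t \in S -> interface x -> connH H t x ->
  meets_interface S.
Proof.
move=> closedS St ix /(closed_under_connH closedS); rewrite St => Sx.
by apply/hasP; exists x; rewrite ?vmemE.
Qed.

Definition stars (u u' : cg_vertex) : seq cg_edge :=
  [seq e <- cg_edges | vmem [:: u; u'] (cg_ends e).1].

Definition is_stars (u u' : cg_vertex) (s : seq cg_edge) : bool :=
  map ecode s == map ecode (stars u u').

Lemma is_starsP (H : {set cg_edge}) u u' :
  is_stars u u' (edges_of H) -> H = [set e | vmem [:: u; u'] (cg_ends e).1].
Proof.
move=> /eqP/(inj_map ecode_inj) eqH; apply/setP => e.
by rewrite inE -mem_edges_of eqH mem_filter mem_cg_edges andbT.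
Qed.

Lemma incident_hubs u u' :
  u \in [:: uNW; uNE; uSE; uSW] -> u' \in [:: uNW; uNE; uSE; uSW] ->
  incident u :|: incident u' = [set e | vmem [:: u; u'] (cg_ends e).1].
Proof.
rewrite -!vmemE => hub_u hub_u'; apply/setP => e; rewrite !inE -!(inj_eq vcode_inj).
by case: u hub_u; case: u' hub_u'; case: e.
Qed.

Definition gadget_ok (s : seq cg_edge) : bool :=
  all (fun t => vmem (component s t) t && closed_under s (component s t)) terminals &&
  (all (fun t => meets_interface (component s t)) terminals ==>
     (6 <= size s) && ((size s == 6) ==> is_stars uNW uSE s || is_stars uNE uSW s)).

Lemma gadget_ok_subseqs : all gadget_ok (subseqs cg_edges).
Proof. by vm_compute. Qed.

Theorem lemma6p4 (H : {set cg_edge}) :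
  (forall t, t \in terminals -> exists2 x, interface x & connH H t x) ->
  6 <= #|H| /\
  (#|H| = 6 ->
     H = incident uNW :|: incident uSE \/ H = incident uNE :|: incident uSW).
Proof.
move=> reach; set s := edges_of H.
have /andP[certified verdict] := all_subseqs_filter (mem H) gadget_ok_subseqs.
have meets : all (fun t => meets_interface (component s t)) terminals.
  apply/allP => t tT; have [x ix tx] := reach t tT.
  have /andP[St closedS] := allP certified t tT.
  by apply: closed_under_meets_interface closedS _ ix tx; rewrite -vmemE.
move/implyP/(_ meets): verdict => /andP[ge6 /implyP eq6].
rewrite card_edges_of; split=> // /eqP/eq6/orP[]/is_starsP ->; [left | right];
  by rewrite incident_hubs // -vmemE.
Qed.
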